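(* Let $u\in\mathcal{R}_{16}$ be such that $|u|=1$. Then $u=\zeta_{16}^\ell$ for some $0\le\ell\le 15$.
   Context: $\zeta_{16}=e^{2\pi i/16}$ and $\mathcal{R}_{16}$ is the smallest subring of $\mathbb{C}$ containing $1/2$ and $\zeta_{16}$. *)

(* complex numbers modelled by algC (algebraic complex numbers),
   which contains every element of R_16. *)
From HB Require Import structures.
From mathcomp Require Import all_boot all_order all_algebra all_field.
Set Implicit Arguments. Unset Strict Implicit. Unset Printing Implicit Defensive.
Import Order.TTheory GRing.Theory Num.Theory.
Local Open Scope ring_scope.

(* zeta16 = e^{2 pi i/16} = cos(pi/8) + i sin(pi/8),
   with cos(pi/8) = sqrt(2+sqrt 2)/2 and sin(pi/8) = sqrt(2-sqrt 2)/2. *)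
Definition zeta16 : algC :=
  (sqrtC (2 + sqrtC 2) + 'i * sqrtC (2 - sqrtC 2)) / 2.

Inductive in_R16 : algC -> Prop :=
  | R16_one : in_R16 1
  | R16_half : in_R16 (2^-1)
  | R16_zeta : in_R16 zeta16
  | R16_add x y : in_R16 x -> in_R16 y -> in_R16 (x + y)
  | R16_opp x : in_R16 x -> in_R16 (- x)
  | R16_mul x y : in_R16 x -> in_R16 y -> in_R16 (x * y).

From HB Require Import structures.
From mathcomp Require Import all_boot all_order all_algebra all_field.
From mathcomp Require Import ring zify.
Import Order.TTheory GRing.Theory Num.Theory.
Local Open Scope ring_scope.

(* Every element of R_16 is a(zeta16) / 2^n for an integer coefficient vector
   a of Z[x]/(x^8 + 1), and these coefficients are unique because x^8 + 1 is
   the minimal polynomial of zeta16.  Complex conjugation is x |-> x^-1, so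
   |u| = 1 becomes a(x) a(x^-1) = 4^n in Z[x]/(x^8 + 1).  A computation modulo 4
   shows that a(x) a(x^-1) = 0 (mod 4) forces a = 0 (mod 2); hence a = 2^n b
   with b(x) b(x^-1) = 1.  The constant term of b(x) b(x^-1) is the sum of the
   squares of the coefficients of b, so b = +-x^k. *)

Lemma prim_root_2pow (R : numDomainType) (z : R) k :
  z ^+ (2 ^ k) = -1 -> (2 ^ k.+1).-primitive_root z.
Proof.
move=> zk; have z1 : z ^+ (2 ^ k.+1) = 1 by rewrite expnSr exprM zk sqrrN expr1n.
have [m prim_m] := prim_order_exists (expn_gt0 2 k.+1) z1.
case/(dvdn_pfactor _ _ (isT : prime 2))=> j.
rewrite leq_eqVlt ltnS => /orP[/eqP-> <- //|le_jk m_eq].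
have : (m %| 2 ^ k)%N by rewrite m_eq dvdn_exp2l.
by rewrite (prim_order_dvd prim_m) zk eq_sym -addr_eq0 -mulr2n pnatr_eq0.
Qed.

Lemma conjC_root8 (z : algC) : z ^+ 8 = -1 -> z^* = - z ^+ 7.
Proof.
move=> z8; have zz : z^* * z = 1.
  have : `|z| = 1.
    by apply/eqP; rewrite -(pexpr_eq1 (isT : (0 < 8)%N)) // -normrX z8 normrN1.
  by move/(congr1 (fun x => x ^+ 2)); rewrite normCK expr1n mulrC.
by rewrite -[LHS]mulr1 -[1 in LHS](opprK 1) -z8 exprS mulrN mulrA zz mul1r.
Qed.

Lemma zeta16X2 : zeta16 ^+ 2 = sqrtC 2 * (1 + 'i) / 2.
Proof.
have s2 : sqrtC 2 ^+ 2 = 2 :> algC by rewrite sqrtCK.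
have s_le2 : sqrtC 2 <= 2 :> algC.
  have four : 2 ^+ 2 = 4%:R :> algC by rewrite -natrX.
  rewrite -[X in _ <= X](sqrCK (ler0n _ 2)) four ler_sqrtC ?nnegrE ?ler0n //.
  by rewrite ler_nat.
have ab : sqrtC (2 + sqrtC 2) * sqrtC (2 - sqrtC 2) = sqrtC 2 :> algC.
  rewrite -sqrtCM ?nnegrE ?subr_ge0 ?addr_ge0 ?sqrtC_ge0 ?ler0n //.
  by congr sqrtC; ring: s2.
have a2 : sqrtC (2 + sqrtC 2) ^+ 2 = 2 + sqrtC 2 :> algC by rewrite sqrtCK.
have b2 : sqrtC (2 - sqrtC 2) ^+ 2 = 2 - sqrtC 2 :> algC by rewrite sqrtCK.
by rewrite /zeta16; field: ab a2 b2 (@sqrCi algC).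
Qed.

Lemma zeta16X8 : zeta16 ^+ 8 = -1.
Proof.
have s2 : sqrtC 2 ^+ 2 = 2 :> algC by rewrite sqrtCK.
by rewrite (exprM _ 2 4) zeta16X2; field: s2 (@sqrCi algC).
Qed.

Lemma minCpoly_indep (z : algC) n (c : nat -> rat) :
  (n < size (minCpoly z))%N -> \sum_(i < n) ratr (c i) * z ^+ i = 0 ->
  forall i, (i < n)%N -> c i = 0.
Proof.
move=> lt_n_z cz0 i lt_in; have [p [minCp _] dvd_p] := minCpolyP z.
pose q := \poly_(i < n) c i.
have p_dvd_q : p %| q.
  rewrite -dvd_p /root (_ : map_poly _ q = \poly_(i < n) ratr (c i)).
    by rewrite horner_poly cz0.
  by apply/polyP => j; rewrite coef_map !coef_poly; case: ifP => _; [|exact: raddf0].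
suff /eqP q0 : q == 0 by have := coef_poly n c i; rewrite -/q q0 coef0 lt_in.
apply: contraLR lt_n_z => nz_q; rewrite -leqNgt minCp size_map_poly.
exact: leq_trans (dvdp_leq nz_q p_dvd_q) (size_poly n c).
Qed.

Lemma size_minCpoly_zeta16 : size (minCpoly zeta16) = 9%N.
Proof.
have prim16 : (2 ^ 4).-primitive_root zeta16 by apply: prim_root_2pow; rewrite zeta16X8.
by rewrite (minCpoly_cyclotomic prim16) size_cyclotomic.
Qed.

(* Elements of Z[x]/(x^8 + 1), by their coefficients on 1, x, ..., x^7
   ("nc": negacyclic). *)
Variant nc8 := NC8 of int & int & int & int & int & int & int & int.

Definition nc8_seq (a : nc8) : seq int :=
  let: NC8 a0 a1 a2 a3 a4 a5 a6 a7 := a in [:: a0; a1; a2; a3; a4; a5; a6; a7].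

Definition nc8_eval {R : pzRingType} (z : R) (a : nc8) : R :=
  let: NC8 a0 a1 a2 a3 a4 a5 a6 a7 := a in
  a0%:~R + a1%:~R * z + a2%:~R * z ^+ 2 + a3%:~R * z ^+ 3 + a4%:~R * z ^+ 4
  + a5%:~R * z ^+ 5 + a6%:~R * z ^+ 6 + a7%:~R * z ^+ 7.

Definition nc8_const (k : int) : nc8 := NC8 k 0 0 0 0 0 0 0.

Definition nc8_map (f : int -> int) (a : nc8) : nc8 :=
  let: NC8 a0 a1 a2 a3 a4 a5 a6 a7 := a in
  NC8 (f a0) (f a1) (f a2) (f a3) (f a4) (f a5) (f a6) (f a7).

Definition nc8_scale (k : int) : nc8 -> nc8 := nc8_map ( *%R k).

Definition nc8_opp : nc8 -> nc8 := nc8_map -%R.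

Definition nc8_add (a b : nc8) : nc8 :=
  let: NC8 a0 a1 a2 a3 a4 a5 a6 a7 := a in
  let: NC8 b0 b1 b2 b3 b4 b5 b6 b7 := b in
  NC8 (a0 + b0) (a1 + b1) (a2 + b2) (a3 + b3) (a4 + b4) (a5 + b5) (a6 + b6) (a7 + b7).

(* Since x^8 = -1, a product a_i b_j with i + j = k + 8 contributes
   - a_i b_j to the coefficient of x^k. *)
Definition nc8_mul (a b : nc8) : nc8 :=
  let: NC8 a0 a1 a2 a3 a4 a5 a6 a7 := a in
  let: NC8 b0 b1 b2 b3 b4 b5 b6 b7 := b in
  NC8 (a0 * b0 - (a1 * b7 + a2 * b6 + a3 * b5 + a4 * b4 + a5 * b3 + a6 * b2 + a7 * b1))
      (a0 * b1 + a1 * b0 - (a2 * b7 + a3 * b6 + a4 * b5 + a5 * b4 + a6 * b3 + a7 * b2))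
      (a0 * b2 + a1 * b1 + a2 * b0 - (a3 * b7 + a4 * b6 + a5 * b5 + a6 * b4 + a7 * b3))
      (a0 * b3 + a1 * b2 + a2 * b1 + a3 * b0 - (a4 * b7 + a5 * b6 + a6 * b5 + a7 * b4))
      (a0 * b4 + a1 * b3 + a2 * b2 + a3 * b1 + a4 * b0 - (a5 * b7 + a6 * b6 + a7 * b5))
      (a0 * b5 + a1 * b4 + a2 * b3 + a3 * b2 + a4 * b1 + a5 * b0 - (a6 * b7 + a7 * b6))
      (a0 * b6 + a1 * b5 + a2 * b4 + a3 * b3 + a4 * b2 + a5 * b1 + a6 * b0 - a7 * b7)
      (a0 * b7 + a1 * b6 + a2 * b5 + a3 * b4 + a4 * b3 + a5 * b2 + a6 * b1 + a7 * b0).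

(* x |-> x^-1 = - x^7; at zeta16 this is complex conjugation. *)
Definition nc8_conj (a : nc8) : nc8 :=
  let: NC8 a0 a1 a2 a3 a4 a5 a6 a7 := a in
  NC8 a0 (- a7) (- a6) (- a5) (- a4) (- a3) (- a2) (- a1).

Definition nc8_norm (a : nc8) : nc8 := nc8_mul a (nc8_conj a).

Lemma nc8_seq_inj : injective nc8_seq.
Proof. by case=> a0 a1 a2 a3 a4 a5 a6 a7 [] b0 b1 b2 b3 b4 b5 b6 b7 [] *; subst. Qed.

Lemma size_nc8_seq a : size (nc8_seq a) = 8%N.
Proof. by case: a. Qed.

Lemma nc8_seq_map f a : nc8_seq (nc8_map f a) = map f (nc8_seq a).
Proof. by case: a. Qed.

Section Evaluation.
Variables (R : comPzRingType) (z : R).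

Lemma nc8_evalE a : nc8_eval z a = \sum_(i < 8) ((nc8_seq a)`_i)%:~R * z ^+ i.
Proof. by case: a => *; rewrite !big_ord_recr big_ord0 /=; ring. Qed.

Lemma nc8_evalD a b : nc8_eval z (nc8_add a b) = nc8_eval z a + nc8_eval z b.
Proof. by case: a; case: b => *; rewrite /= !intrD; ring. Qed.

Lemma nc8_evalN a : nc8_eval z (nc8_opp a) = - nc8_eval z a.
Proof. by case: a => *; rewrite /= !intrN; ring. Qed.

Lemma nc8_evalZ k a : nc8_eval z (nc8_scale k a) = k%:~R * nc8_eval z a.
Proof. by case: a => *; rewrite /= !intrM; ring. Qed.

Hypothesis z8 : z ^+ 8 = -1.

Lemma nc8_evalM a b : nc8_eval z (nc8_mul a b) = nc8_eval z a * nc8_eval z b.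
Proof. by case: a; case: b => *; rewrite /=; ring: z8. Qed.

Lemma nc8_eval_conj a : nc8_eval z (nc8_conj a) = nc8_eval (- z ^+ 7) a.
Proof. by case: a => *; rewrite /=; ring: z8. Qed.

End Evaluation.

Lemma rmorph_nc8_eval {R S : pzRingType} (f : {rmorphism R -> S}) z a :
  f (nc8_eval z a) = nc8_eval (f z) a.
Proof. by case: a => *; rewrite /= !(rmorphD, rmorphM, rmorphXn, rmorph_int). Qed.

Lemma nc8_scale_const k x : nc8_scale k (nc8_const x) = nc8_const (k * x).
Proof. by rewrite /nc8_scale /= mulr0. Qed.

Lemma nc8_scale_inj k : k != 0 -> injective (nc8_scale k).
Proof.
move=> k_neq0 a b /(congr1 nc8_seq); rewrite !nc8_seq_map.
by move=> /(inj_map (mulfI k_neq0))/nc8_seq_inj.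
Qed.

Lemma nc8_norm_scale k a : nc8_norm (nc8_scale k a) = nc8_scale (k ^+ 2) (nc8_norm a).
Proof. by case: a => *; rewrite /nc8_norm /=; congr NC8; ring. Qed.

Lemma nc8_normD_scale d q r :
  exists c, nc8_norm (nc8_add (nc8_scale d q) r) = nc8_add (nc8_scale d c) (nc8_norm r).
Proof.
exists (nc8_add (nc8_add (nc8_mul q (nc8_conj r)) (nc8_mul r (nc8_conj q)))
                 (nc8_scale d (nc8_norm q))).
by case: q; case: r => *; rewrite /nc8_norm /=; congr NC8; ring.
Qed.

Lemma nc8_divz_eq a d :
  a = nc8_add (nc8_scale d (nc8_map (divz^~ d) a)) (nc8_map (modz^~ d) a).
Proof. by case: a => *; rewrite /=; congr NC8; rewrite mulrC -divz_eq. Qed.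

Definition nc8_dvd (d : int) (a : nc8) : bool := all (fun x => d %| x)%Z (nc8_seq a).

Lemma nc8_dvdP d a : reflect (exists b, a = nc8_scale d b) (nc8_dvd d a).
Proof.
apply: (iffP allP) => [dvd_a | [b ->] y].
  exists (nc8_map (divz^~ d) a); apply: nc8_seq_inj; rewrite !nc8_seq_map -map_comp.
  by rewrite -[LHS]map_id; apply/eq_in_map => x /dvd_a/divzK; rewrite mulrC.
by rewrite nc8_seq_map => /mapP[x _ ->]; apply: dvdz_mulr.
Qed.

Lemma nc8_dvd_scale d k a : (d %| k)%Z -> nc8_dvd d (nc8_scale k a).
Proof.
by move=> dvd_dk; apply/allP; rewrite nc8_seq_map => _ /mapP[x _ ->]; apply: dvdz_mulr.
Qed.

Lemma nc8_dvdDl d b a : nc8_dvd d b -> nc8_dvd d (nc8_add b a) = nc8_dvd d a.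
Proof.
case: b a => b0 b1 b2 b3 b4 b5 b6 b7 [] a0 a1 a2 a3 a4 a5 a6 a7.
by rewrite /nc8_dvd /= => /and5P[d0 d1 d2 d3 /and5P[d4 d5 d6 d7 _]]; rewrite !rpredDl.
Qed.

Definition nc8_all (s : seq int) (P : pred nc8) : bool :=
  all (fun a0 => all (fun a1 => all (fun a2 => all (fun a3 =>
  all (fun a4 => all (fun a5 => all (fun a6 => all (fun a7 =>
    P (NC8 a0 a1 a2 a3 a4 a5 a6 a7)) s) s) s) s) s) s) s) s.

Lemma nc8_allP s P a : nc8_all s P -> all (mem s) (nc8_seq a) -> P a.
Proof.
move=> all_P; case: a => a0 a1 a2 a3 a4 a5 a6 a7.
case/and5P=> s0 s1 s2 s3 /and5P[s4 s5 s6 s7 _].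
by move: all_P => /allP/(_ _ s0)/allP/(_ _ s1)/allP/(_ _ s2)/allP/(_ _ s3)
                  /allP/(_ _ s4)/allP/(_ _ s5)/allP/(_ _ s6)/allP/(_ _ s7).
Qed.

(* Stands in for the total ramification 2 = unit * (1 - zeta16)^8: the norm
   modulo 4 only depends on the residues modulo 4 (nc8_normD_scale), so the
   4^8 of them are checked by computation. *)
Lemma nc8_norm_dvd4_residues :
  nc8_all [:: 0; 1; 2; 3] (fun r => nc8_dvd 4 (nc8_norm r) ==> nc8_dvd 2 r).
Proof. by vm_compute. Qed.

Lemma modz4_mem x : (x %% 4)%Z \in [:: 0; 1; 2; 3].
Proof.
by have := @modz_ge0 x 4 isT; have := @ltz_pmod x 4 isT; rewrite !inE; lia.
Qed.

Lemma nc8_dvd2_of_dvd4_norm a : nc8_dvd 4 (nc8_norm a) -> nc8_dvd 2 a.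
Proof.
rewrite (nc8_divz_eq a 4); set q := nc8_map _ a; set r := nc8_map (modz^~ 4) a.
have [c ->] := nc8_normD_scale 4 q r.
rewrite !nc8_dvdDl ?nc8_dvd_scale //; apply/implyP.
apply: (@nc8_allP _ _ r nc8_norm_dvd4_residues).
by rewrite nc8_seq_map; apply/allP => _ /mapP[x _ ->]; apply: modz4_mem.
Qed.

Lemma sum_sqr_eq1 (s : seq int) : \sum_(x <- s) x ^+ 2 = 1 ->
  exists2 k, (k < size s)%N & (s`_k = 1 \/ s`_k = -1) /\ forall i, i != k -> s`_i = 0.
Proof.
elim: s => [|x s IHs]; first by rewrite big_nil.
have sum_ge0 : 0 <= \sum_(y <- s) y ^+ 2 by apply: sumr_ge0 => y _; apply: sqr_ge0.
rewrite big_cons; have [-> | x_neq0 sum1] := eqVneq x 0.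
  rewrite expr0n add0r => /IHs[k lt_k [sk s0]].
  by exists k.+1 => //; split=> // [[|i]] //= /s0.
have x2 : x ^+ 2 = 1.
  by move: (\sum_(y <- s) _) sum1 sum_ge0 x_neq0 => S; rewrite expr2; nia.
move: sum1; rewrite x2 -[RHS]addr0 => /addrI/eqP.
rewrite psumr_eq0 => [s0|y _]; last exact: sqr_ge0.
exists 0%N => //; split=> [|[|i] //= _].
  by move/eqP: x2; rewrite sqrf_eq1 => /orP[/eqP-> | /eqP->]; [left | right].
have [lt_i | le_i] := ltnP i (size s); last by rewrite nth_default.
by apply/eqP; rewrite -sqrf_eq0; apply: (allP s0); apply: mem_nth.
Qed.

Lemma head_nc8_norm a :
  head 0 (nc8_seq (nc8_norm a)) = \sum_(x <- nc8_seq a) x ^+ 2.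
Proof. by case: a => *; rewrite /= !big_cons big_nil; ring. Qed.

Section Descent.
Context {R : comPzRingType} {z : R}.
Hypothesis z8 : z ^+ 8 = -1.

Lemma nc8_norm_eq1 a : nc8_norm a = nc8_const 1 ->
  exists2 l, (l <= 15)%N & nc8_eval z a = z ^+ l.
Proof.
move=> /(congr1 (head 0 \o nc8_seq)); rewrite /= head_nc8_norm.
case/sum_sqr_eq1=> k; rewrite size_nc8_seq => lt_k8 [sk s0].
have -> : nc8_eval z a = ((nc8_seq a)`_k)%:~R * z ^+ k.
  rewrite nc8_evalE (bigD1 (Ordinal lt_k8)) //= big1 ?addr0 // => i ne_ik.
  by rewrite s0 ?mul0r.
case: sk => ->.
  by exists k; [lia | rewrite mul1r].
by exists (k + 8)%N; [lia | rewrite exprD z8 mulrN1 mulN1r].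
Qed.

Lemma nc8_norm_pow4 n a : nc8_norm a = nc8_const (4 ^+ n) ->
  exists2 l, (l <= 15)%N & nc8_eval z a = 2 ^+ n * z ^+ l.
Proof.
elim: n a => [|n IHn] a norm_a.
  by move: norm_a; rewrite expr0 => /nc8_norm_eq1[l lt_l ->]; exists l; rewrite ?mul1r.
move: norm_a; rewrite exprS -nc8_scale_const => norm_a.
have /nc8_dvdP[b a_eq] : nc8_dvd 2 a.
  by apply: nc8_dvd2_of_dvd4_norm; rewrite norm_a nc8_dvd_scale.
have /IHn[l lt_l eval_b] : nc8_norm b = nc8_const (4 ^+ n).
  by apply: (@nc8_scale_inj 4) => //; rewrite -norm_a a_eq nc8_norm_scale.
by exists l; rewrite // a_eq nc8_evalZ eval_b exprS mulrA.
Qed.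

End Descent.

Lemma nc8_eval_zeta16_inj : injective (nc8_eval zeta16).
Proof.
move=> a b eq_ab; apply/nc8_seq_inj/(@eq_from_nth _ 0);
  rewrite !size_nc8_seq // => i lt_i8.
apply/eqP; rewrite -subr_eq0 -(intr_eq0 rat); apply/eqP; move: i lt_i8.
apply: (@minCpoly_indep zeta16 8 (fun i => ((nc8_seq a)`_i - (nc8_seq b)`_i)%:~R)).
  by rewrite size_minCpoly_zeta16.
under eq_bigr do rewrite rmorph_int intrB mulrBl.
by rewrite sumrB -!nc8_evalE eq_ab subrr.
Qed.

Lemma nc8_eval_zeta16_norm a :
  nc8_eval zeta16 (nc8_norm a) = `|nc8_eval zeta16 a| ^+ 2.
Proof.
rewrite nc8_evalM ?zeta16X8 // nc8_eval_conj ?zeta16X8 // -conjC_root8 ?zeta16X8 //.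
by rewrite -(rmorph_nc8_eval Num.conj) normCK.
Qed.

Lemma in_R16_eval u : in_R16 u -> exists n a, u = nc8_eval zeta16 a / 2 ^+ n.
Proof.
have two_neq0 n : (2 : algC) ^+ n != 0 by rewrite expf_neq0 // pnatr_eq0.
elim=> {u} [| | |x y _ [n [a ->]] _ [m [b ->]] | x _ [n [a ->]]
              | x y _ [n [a ->]] _ [m [b ->]]].
- by exists 0%N, (nc8_const 1); rewrite /=; field.
- by exists 1%N, (nc8_const 1); rewrite /=; field.
- by exists 0%N, (NC8 0 1 0 0 0 0 0 0); rewrite /=; field.
- exists (n + m)%N, (nc8_add (nc8_scale (2 ^+ m) a) (nc8_scale (2 ^+ n) b)).
  rewrite nc8_evalD !nc8_evalZ !rmorphXn exprD.
  by field; rewrite !two_neq0.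
- by exists n, (nc8_opp a); rewrite nc8_evalN mulNr.
- exists (n + m)%N, (nc8_mul a b).
  by rewrite nc8_evalM ?zeta16X8 // exprD invfM mulrACA.
Qed.

Theorem lemma6p2 (u : algC) :
  in_R16 u -> `|u| = 1 ->
  exists l : nat, (l <= 15)%N /\ u = zeta16 ^+ l.
Proof.
move=> /in_R16_eval[n [a ->]].
have two_neq0 : (2 : algC) ^+ n != 0 by rewrite expf_neq0 // pnatr_eq0.
rewrite normf_div normrX normr_nat => /(canRL (divfK two_neq0)).
rewrite mul1r => norm_eval.
have norm_a : nc8_norm a = nc8_const (4 ^+ n).
  apply: nc8_eval_zeta16_inj; rewrite nc8_eval_zeta16_norm norm_eval /= rmorphXn.
  by rewrite -exprM mulnC exprM expr2 -natrM; ring.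
have /(nc8_norm_pow4 zeta16X8)[l lt_l ->] := norm_a.
by exists l; rewrite mulrC mulKf.
Qed.
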